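(* Let $\mathcal{A}=\langle\Sigma\times K, S, S_0, \Delta, S_F\rangle$ be an NFA over $\Sigma\times K$ with $K=\{1,\dots,k\}$. For any $w\in\Sigma^*$, $m\in K$, $i,j\in\mathbb{N}$, $s\in S^m_{w[i..j]}$, $i'\in\{i+1,i+2,\dots,i+\Delta^m_{\mathrm{KMP}}(s)-1\}$, and $j'\ge i'$, we have $w[i'..j']\notin\pi_m(\mathcal{L}(\mathcal{A}))$.
   Context: $\mathcal{L}(\cdot)$ denotes the language of an NFA. For $\tilde w\in(\Sigma\times K)^*$ and $x\in K$, $\pi_x(\tilde w)\in\Sigma^*$ deletes the letters $(a,x')$ with $x'\ne x$ and replaces each remaining $(a,x)$ by $a$; $\pi_x(L)=\{\pi_x(\tilde w)\mid\tilde w\in L\}$. For $w=\sigma_1\cdots\sigma_n$, $w[i..j]=\sigma_i\cdots\sigma_j$. For $s\in S$, $\mathcal{A}_s=\langle\Sigma\times K,S,S_0,\Delta,\{s\}\rangle$. For $m\in K$, $s\in S$: $\Delta^m_{\mathrm{KMP}}(s)=\min\{n\in\mathbb{N}_{+}\mid (\pi_m(\mathcal{L}(\mathcal{A}_s))\cdot\Sigma^* )\cap(\Sigma^n\cdot\pi_m(\mathcal{L}(\mathcal{A}))\cdot\Sigma^* )\neq\emptyset\}$. For $v\in\Sigma^*$ and $m\in K$, $S^m_v=\{s\in S\mid v\in\pi_m(\mathcal{L}(\mathcal{A}_s))\}$. *)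

From mathcomp Require Import all_boot.
Set Implicit Arguments. Unset Strict Implicit. Unset Printing Implicit Defensive.

(* An NFA  A = < Sigma x K, S, S0, Delta, SF >  with K = 'I_k (labels 0..k-1
   standing for 1..k), given by: a finite alphabet Sigma, a finite state type
   S, initial states S0, transition relation Delta, final states SF. *)

Section NFA.
Variables (Sigma : finType) (k : nat) (S : finType).
Variable Delta : {set S * (Sigma * 'I_k) * S}.

Fixpoint reach (s : S) (w : seq (Sigma * 'I_k)) (t : S) : bool :=
  match w with
  | [::] => s == t
  | a :: w' => [exists s' : S, ((s, a, s') \in Delta) && reach s' w' t]
  end.

Definition lang (S0 F : {set S}) (w : seq (Sigma * 'I_k)) : Prop :=
  exists s0, exists f, [/\ s0 \in S0, f \in F & reach s0 w f].

Definition proj (x : 'I_k) (w : seq (Sigma * 'I_k)) : seq Sigma :=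
  [seq a.1 | a <- w & a.2 == x].

Definition proj_lang (x : 'I_k) (L : seq (Sigma * 'I_k) -> Prop)
  (v : seq Sigma) : Prop :=
  exists tw, L tw /\ proj x tw = v.

(* the set {n | (pi_m(L(A_s)) . Sigma^* ) cap (Sigma^n . pi_m(L(A)) . Sigma^* ) <> empty },
   where A_s has final states {s} *)
Definition kmp_set (S0 SF : {set S}) (m : 'I_k) (s : S) (n : nat) : Prop :=
  exists u : seq Sigma,
    (exists v y, proj_lang m (lang S0 [set s]) v /\ u = v ++ y) /\
    (exists x z y, [/\ size x = n, proj_lang m (lang S0 SF) z & u = x ++ z ++ y]).

(* d < Delta^m_KMP(s), where Delta^m_KMP(s) is the minimum of the positive
   elements of kmp_set (taken to be +infinity if there is none) *)
Definition lt_DeltaKMP (S0 SF : {set S}) (m : 'I_k) (s : S) (d : nat) : Prop :=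
  forall n, 0 < n -> kmp_set S0 SF m s n -> d < n.

Definition in_Sm (S0 : {set S}) (m : 'I_k) (v : seq Sigma) (s : S) : Prop :=
  proj_lang m (lang S0 [set s]) v.
End NFA.

(* w[i..j] = sigma_i ... sigma_j (1-indexed) *)
Definition subw (T : Type) (w : seq T) (i j : nat) : seq T :=
  drop i.-1 (take j w).

From mathcomp Require Import all_boot.
From mathcomp Require Import zify.

(* The suffix of w starting at position i witnesses that i' - i lies in the
   KMP set of s: it begins with w[i..j], which s recognises, and after its
   first i' - i letters it continues with w[i'..j'].  Since i' - i is below
   the least positive element of that set, w[i'..j'] cannot be in
   pi_m(L(A)). *)

Lemma drop_take_prefix (T : Type) (a b : nat) (s : seq T) :
  drop a s = drop a (take b s) ++ drop (b - a) (drop a s).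
Proof.
case: (leqP a b) => [le_ab | lt_ba].
  by rewrite -{1}(subnK le_ab) -take_drop cat_take_drop.
have -> : drop a (take b s) = [::].
  by apply: size0nil; rewrite size_drop size_take; case: ifP; lia.
have -> : b - a = 0 by lia.
by rewrite drop0.
Qed.

Lemma subw_prefix (T : Type) (w : seq T) (i j : nat) :
  drop i.-1 w = subw w i j ++ drop (j - i.-1) (drop i.-1 w).
Proof. exact: drop_take_prefix. Qed.

Lemma subw_offset (T : Type) (w : seq T) (i i' j' : nat) :
  0 < i -> i <= i' ->
  drop i.-1 w = take (i' - i) (drop i.-1 w) ++ subw w i' j'
                ++ drop (j' - i'.-1) (drop i'.-1 w).
Proof.
move=> i_gt0 le_ii'.
rewrite -subw_prefix -{1}(cat_take_drop (i' - i) (drop i.-1 w)) drop_drop.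
by congr (_ ++ drop _ w); lia.
Qed.

Lemma kmp_set_offset (Sigma : finType) (k : nat) (S : finType)
  (Delta : {set S * (Sigma * 'I_k) * S}) (S0 SF : {set S}) (m : 'I_k) (s : S)
  (w : seq Sigma) (i j i' j' : nat) :
  0 < i -> i <= i' -> i' <= size w ->
  in_Sm Delta S0 m (subw w i j) s ->
  proj_lang m (lang Delta S0 SF) (subw w i' j') ->
  kmp_set Delta S0 SF m s (i' - i).
Proof.
move=> i_gt0 le_ii' le_i'w s_in_Sm inL.
exists (drop i.-1 w); split.
  by exists (subw w i j), (drop (j - i.-1) (drop i.-1 w)); rewrite -subw_prefix.
exists (take (i' - i) (drop i.-1 w)), (subw w i' j'),
  (drop (j' - i'.-1) (drop i'.-1 w)).
split=> //; last exact: subw_offset.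
by rewrite size_take size_drop; case: ifP; lia.
Qed.

Theorem lemma1 (Sigma : finType) (k : nat) (S : finType)
  (S0 : {set S}) (Delta : {set S * (Sigma * 'I_k) * S}) (SF : {set S})
  (w : seq Sigma) (m : 'I_k) (i j : nat) (s : S) (i' j' : nat) :
  1 <= i -> j <= size w -> j' <= size w ->
  in_Sm Delta S0 m (subw w i j) s ->
  i < i' -> lt_DeltaKMP Delta S0 SF m s (i' - i) ->
  i' <= j' ->
  ~ proj_lang m (lang Delta S0 SF) (subw w i' j').
Proof.
move=> i_gt0 _ le_j'w s_in_Sm lt_ii' below_kmp le_i'j' inL.
have gap_in_kmp : kmp_set Delta S0 SF m s (i' - i).
  apply: kmp_set_offset s_in_Sm inL => //; first exact: ltnW.
  exact: leq_trans le_i'j' le_j'w.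
have gap_gt0 : 0 < i' - i by rewrite subn_gt0.
by have := below_kmp _ gap_gt0 gap_in_kmp; rewrite ltnn.
Qed.
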